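(* Let $\mathcal H$ be a finite-dimensional Hilbert space, $H$ a Hermitian operator on $\mathcal H$, $\beta$ a finite nonzero real number, and $\gamma_{\beta,H}=e^{-\beta H}/\mathrm{Tr}\,e^{-\beta H}$ (a full-rank density operator). For a density operator $\rho$ on $\mathcal H$ define the weight of athermality $$A_w(\rho)=\min_{\tau\in\mathscr D(\mathcal H)}\{a\ge 0:\ \rho=(1-a)\gamma_{\beta,H}+a\tau\}.$$ Then this minimum is attained and $$A_w(\rho)=a:=1-\mu_{\min}\!\left(\gamma_{\beta,H}^{-1/2}\,\rho\,\gamma_{\beta,H}^{-1/2}\right),$$ where $\mu_{\min}$ denotes the smallest eigenvalue; moreover $0\le a\le 1$, with $a=0$ if and only if $\rho=\gamma_{\beta,H}$. If $\rho\neq\gamma_{\beta,H}$, the density operator $\tau$ with $\rho=(1-a)\gamma_{\beta,H}+a\tau$ for this minimal $a$ is unique and equals $\tau=\big(\rho-(1-a)\gamma_{\beta,H}\big)/a$.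
   Context: $\mathscr D(\mathcal H)$ denotes the set of density operators (positive semidefinite, unit trace) on $\mathcal H$. $\gamma^{\pm1/2}$ denote the positive square roots of $\gamma$ and of its inverse. *)

From HB Require Import structures.
From mathcomp Require Import all_boot all_order all_algebra.
From mathcomp Require Import complex.
From mathcomp Require Import classical_sets reals sequences exp.
Set Implicit Arguments. Unset Strict Implicit. Unset Printing Implicit Defensive.
Import Order.TTheory GRing.Theory Num.Theory.
Local Open Scope ring_scope.

Section Defs.
Variable R : realType.
Local Notation C := R[i].

Definition adjmx n m (M : 'M[C]_(n, m)) : 'M[C]_(m, n) := (map_mx Num.conj M)^T.

Definition hermitian_mx n (M : 'M[C]_n) : Prop := M = adjmx M.

Definition unitary_mx n (U : 'M[C]_n) : Prop := U *m adjmx U = 1%:M.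

Definition psd_mx n (M : 'M[C]_n) : Prop :=
  hermitian_mx M /\ forall v : 'rV[C]_n, 0 <= (v *m M *m adjmx v) 0 0.

Definition density_mx n (M : 'M[C]_n) : Prop := psd_mx M /\ \tr M = 1.

(* functional calculus: f applied to the Hermitian matrix U diag(d) U^* *)
Definition fun_mx n (f : R -> R) (U : 'M[C]_n) (d : 'rV[R]_n) : 'M[C]_n :=
  U *m diag_mx (\row_i ((f (d 0 i))%:C)%C) *m adjmx U.

(* gamma = exp(-beta H) / Tr exp(-beta H), with exp(-beta H) defined through a
   spectral decomposition H = U diag(d) U^* (U unitary, d real). *)
Definition gibbs_state n (beta : R) (H gamma : 'M[C]_n) : Prop :=
  exists (U : 'M[C]_n) (d : 'rV[R]_n),
    unitary_mx U /\ H = fun_mx id U d /\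
    let E := fun_mx (fun x => expR (- (beta * x))) U d in
    gamma = (\tr E)^-1 *: E.

(* smallest eigenvalue of a Hermitian matrix (all its eigenvalues are real) *)
Definition mu_min n (M : 'M[C]_n) : R := inf [set x : R | eigenvalue M (x%:C)%C].

Definition athermality_set n (gamma rho : 'M[C]_n) : set R :=
  [set a : R | 0 <= a /\ exists tau : 'M[C]_n,
     density_mx tau /\ rho = ((1 - a)%:C)%C *: gamma + (a%:C)%C *: tau].

End Defs.

From HB Require Import structures.
From mathcomp Require Import all_boot all_order all_algebra.
From mathcomp Require Import complex spectral sesquilinear lra.
From mathcomp Require Import classical_sets reals sequences exp.
Import Order.TTheory GRing.Theory Num.Theory.
Set Implicit Arguments. Unset Strict Implicit. Unset Printing Implicit Defensive.
Local Open Scope ring_scope.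

(* Conjugation by [gamma^-1/2] turns [rho - c gamma] into [M - c] with
   [M = gamma^-1/2 rho gamma^-1/2], so [rho - c gamma] is positive semidefinite
   iff [c <= mu_min M]. A decomposition [rho = (1 - a) gamma + a tau] with a
   density operator [tau] exists iff [a >= 0] and [rho - (1 - a) gamma] is
   positive semidefinite: for [a > 0] take [tau = (rho - (1 - a) gamma) / a],
   which has trace one because [Tr rho = Tr gamma = 1]; for [a = 0] the
   positive semidefinite trace-zero matrix [rho - gamma] vanishes. Hence the
   feasible set is [[1 - mu_min M, +oo)]; finally [0 <= mu_min M] as [M] is
   positive semidefinite, and taking traces gives [mu_min M <= 1]. *)

Section ComplexMatrices.
Variable R : realType.
Local Notation C := R[i].

Lemma adjmxE n m (A : 'M[C]_(n, m)) : adjmx A = (A ^t* )%sesqui.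
Proof. by rewrite /adjmx map_trmx. Qed.

Lemma adjmxK n m (A : 'M[C]_(n, m)) : adjmx (adjmx A) = A.
Proof. by rewrite !adjmxE trmxCK. Qed.

Lemma adjmxM n m p (A : 'M[C]_(n, m)) (B : 'M[C]_(m, p)) :
  adjmx (A *m B) = adjmx B *m adjmx A.
Proof. by rewrite /adjmx map_mxM trmx_mul. Qed.

Lemma adjmxZ n m c (A : 'M[C]_(n, m)) : adjmx (c *: A) = c^* *: adjmx A.
Proof. by apply/matrixP => i j; rewrite !mxE rmorphM. Qed.

Lemma adjmx1 n : adjmx (1%:M : 'M[C]_n) = 1%:M.
Proof. by rewrite /adjmx map_mx1 trmx1. Qed.

Lemma adj_unitary_mx n (U : 'M[C]_n) : unitary_mx U -> adjmx U *m U = 1%:M.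
Proof. exact: mulmx1C. Qed.

Lemma rV_adj_gt0 n (v : 'rV[C]_n) : v != 0 -> 0 < (v *m adjmx v) 0 0.
Proof. by move=> v_neq0; rewrite adjmxE -dotmxE (dnorm_gt0 (@dotmx C n)). Qed.

Lemma psd_mx_congr n m (X : 'M[C]_n) (B : 'M[C]_(n, m)) :
  psd_mx X -> psd_mx (adjmx B *m X *m B).
Proof.
case=> hX qX; split; first by rewrite /hermitian_mx !adjmxM adjmxK mulmxA -hX.
by move=> v; have := qX (v *m adjmx B); rewrite adjmxM adjmxK !mulmxA.
Qed.

Lemma psd_mx_congr_unit n (X G : 'M[C]_n) :
  G \in unitmx -> psd_mx (adjmx G *m X *m G) <-> psd_mx X.
Proof.
move=> G_unit; split; last exact: psd_mx_congr.
set K := invmx G => /(psd_mx_congr K).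
have adjKG : adjmx K *m adjmx G = 1%:M by rewrite -adjmxM mulmxV // adjmx1.
by rewrite !mulmxA adjKG mul1mx -mulmxA mulmxV // mulmx1.
Qed.

Lemma psd_mxZ n (X : 'M[C]_n) (c : R) :
  0 <= c -> psd_mx X -> psd_mx ((c%:C)%C *: X).
Proof.
move=> c_ge0 [hX qX]; have conj_c : (c%:C)%C^* = (c%:C)%C by exact: conjc_real.
split; first by rewrite /hermitian_mx adjmxZ conj_c -hX.
by move=> v; rewrite -scalemxAr -scalemxAl mxE mulr_ge0 ?ler0c.
Qed.

Lemma psd_diag_mx n (D : 'rV[C]_n) : (forall i, 0 <= D 0 i) -> psd_mx (diag_mx D).
Proof.
move=> D_ge0; split.
  apply/matrixP => i j; rewrite !mxE eq_sym rmorphMn.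
  by case: eqP => [->|//]; congr (_ *+ _); apply/esym; exact: geC0_conj.
move=> v; rewrite mul_mx_diag mxE; apply: sumr_ge0 => i _.
by rewrite !mxE mulrAC mulr_ge0 // mul_conjC_ge0.
Qed.

Lemma psd_mx_tr_ge0 n (X : 'M[C]_n) : psd_mx X -> 0 <= \tr X.
Proof.
case=> _ qX; apply: sumr_ge0 => i _.
have adj_e : adjmx (delta_mx 0 i : 'rV[C]_n) = delta_mx i 0.
  by apply/matrixP => k l; rewrite !mxE rmorphMn rmorph1 andbC.
by have := qX (delta_mx 0 i); rewrite adj_e -rowE -colE !mxE.
Qed.

Lemma psd_subC_eigenvalue_ge n (M : 'M[C]_n) (c x : C) :
  psd_mx (M - c%:M) -> eigenvalue M x -> c <= x.
Proof.
case=> _ qM /eigenvalueP [v vM v_neq0].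
have := qM v; rewrite mulmxBr mulmxBl vM mul_mx_scalar -!scalemxAl -scalerBl mxE.
by rewrite pmulr_lge0 ?subr_ge0 // rV_adj_gt0.
Qed.

Lemma hermitian_spectral n (M : 'M[C]_n) : hermitian_mx M ->
  exists (P : 'M[C]_n) (d : 'rV[R]_n),
  [/\ unitary_mx P, M = adjmx P *m diag_mx (map_mx (real_complex R) d) *m P &
      forall i, eigenvalue M ((d 0 i)%:C)%C].
Proof.
move=> hM; have hM' : M \is hermsymmx.
  by apply/is_hermitianmxP; rewrite expr0 scale1r -adjmxE.
have /orthomx_spectralP := hermitian_normalmx hM'.
have /mxOverP D_real := hermitian_spectral_diag_real hM'.
have P_unitary := spectral_unitarymx M.
rewrite invmx_unitary // -adjmxE.
set P := spectralmx M; set D := spectral_diag M => ME.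
have PP : unitary_mx P by rewrite /unitary_mx adjmxE; apply/unitarymxP.
have DE : D = map_mx (real_complex R) (map_mx (@complex.Re R) D).
  by apply/matrixP => i j; rewrite !mxE /= RRe_real.
exists P, (map_mx (@complex.Re R) D); split; rewrite -?DE // => i.
apply/eigenvalueP; exists (delta_mx 0 i *m P).
  rewrite {1}ME !mulmxA -(mulmxA _ P) PP mulmx1 scalemxAl; congr (_ *m _).
  apply/matrixP => k l; rewrite mul_mx_diag !mxE [k]ord1 eqxx /= RRe_real //.
  by case: eqP => [->|_]; rewrite ?mulr1 ?mul1r ?mulr0 ?mul0r.
apply: contraTneq isT => /(congr1 (mulmx^~ (adjmx P))).
rewrite -mulmxA PP mulmx1 mul0mx => /matrixP /(_ 0 i).
by rewrite !mxE !eqxx => /eqP; rewrite oner_eq0.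
Qed.

Lemma psd_mx_tr_eq0 n (X : 'M[C]_n) : psd_mx X -> \tr X = 0 -> X = 0.
Proof.
move=> pX; have [P [d [PP XE d_eig]]] := hermitian_spectral pX.1.
have d_ge0 i : 0 <= d 0 i.
  by rewrite -ler0c; apply: psd_subC_eigenvalue_ge (d_eig i); rewrite raddf0 subr0.
rewrite XE mxtrace_mulC mulmxA PP mul1mx mxtrace_diag => /eqP.
rewrite psumr_eq0 => [/allP d_eq0|i _]; last by rewrite mxE ler0c.
suff -> : map_mx (real_complex R) d = 0 by rewrite raddf0 mulmx0 mul0mx.
by apply/matrixP => k l; rewrite [k]ord1 [RHS]mxE; apply/eqP/d_eq0/mem_index_enum.
Qed.

Section SmallestEigenvalue.
Variables (n : nat) (M : 'M[C]_n).
Hypotheses (hM : hermitian_mx M) (n_gt0 : (0 < n)%N).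

Lemma psd_subC_mu_min (c : R) : psd_mx (M - ((c%:C)%C)%:M) <-> c <= mu_min M.
Proof.
have [P [d [PP ME d_eig]]] := hermitian_spectral hM.
have psd_sub_le c' : (forall i, c' <= d 0 i) -> psd_mx (M - ((c'%:C)%C)%:M).
  have -> : M - ((c'%:C)%C)%:M =
      adjmx P *m diag_mx (map_mx (real_complex R) (d - const_mx c')) *m P.
    rewrite map_mxB map_const_mx raddfB /= diag_const_mx mulmxBr mulmxBl ME.
    by rewrite mul_mx_scalar -scalemxAl adj_unitary_mx // scalemx1.
  by move=> c'_le; apply/psd_mx_congr/psd_diag_mx => i; rewrite !mxE ler0c subr_ge0.
(* [mu_min M] is an [inf]; it behaves because the eigenvalues form a nonempty
   set ([0 < n]) bounded below by the smallest spectral value. *)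
set S := [set x : R | eigenvalue M (x%:C)%C]%classic.
have S_neq0 : (S !=set0)%classic by exists (d 0 (Ordinal n_gt0)); apply: d_eig.
have lb_S c' : psd_mx (M - ((c'%:C)%C)%:M) -> lbound S c'.
  by move=> psdc' x Sx; rewrite -lecR; apply: psd_subC_eigenvalue_ge psdc' Sx.
have S_lb : has_lbound S.
  have [i0 _ i0_min] := arg_minP (fun i => d 0 i) (isT : predT (Ordinal n_gt0)).
  by exists (d 0 i0); apply/lb_S/psd_sub_le => i; apply: i0_min.
split; first by move=> /lb_S; apply: lb_le_inf.
move=> c_le; apply: psd_sub_le => i; apply: le_trans c_le _.
by have := ge_inf S_lb (d_eig i).
Qed.
End SmallestEigenvalue.

Section FunctionalCalculus.
Variables (n : nat) (U : 'M[C]_n) (d : 'rV[R]_n).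
Hypothesis U_unitary : unitary_mx U.

Lemma eq_fun_mx (f g : R -> R) : f =1 g -> fun_mx f U d = fun_mx g U d.
Proof.
by move=> fg; congr (_ *m diag_mx _ *m _); apply/matrixP => i j; rewrite !mxE fg.
Qed.

Lemma fun_mxM (f g : R -> R) :
  fun_mx f U d *m fun_mx g U d = fun_mx (fun x => f x * g x) U d.
Proof.
rewrite /fun_mx !mulmxA -(mulmxA _ (adjmx U)) adj_unitary_mx // mulmx1.
rewrite -(mulmxA U) mulmx_diag; congr (_ *m diag_mx _ *m _).
by apply/matrixP => i j; rewrite !mxE rmorphM.
Qed.

Lemma fun_mx1 : fun_mx (fun=> 1) U d = 1%:M.
Proof.
rewrite /fun_mx (_ : \row_i _ = const_mx 1); first by rewrite diag_const_mx mulmx1.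
by apply/matrixP => i j; rewrite !mxE.
Qed.

Lemma mxtrace_fun_mx (f : R -> R) : \tr (fun_mx f U d) = ((\sum_i f (d 0 i))%:C)%C.
Proof.
rewrite mxtrace_mulC mulmxA adj_unitary_mx // mul1mx mxtrace_diag rmorph_sum.
by apply: eq_bigr => i _; rewrite mxE.
Qed.

End FunctionalCalculus.

Lemma gibbs_state_unit_tr n (beta : R) (H gamma : 'M[C]_n) : (0 < n)%N ->
  gibbs_state beta H gamma -> gamma \in unitmx /\ \tr gamma = 1.
Proof.
move=> n_gt0 [U [d [U_unitary [_ /= gammaE]]]]; set E := fun_mx _ U d in gammaE.
have trE_neq0 : \tr E != 0.
  rewrite mxtrace_fun_mx // eq_complex /= eqxx andbT gt_eqF //.
  rewrite (bigD1 (Ordinal n_gt0)) //=.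
  by rewrite ltr_pwDl ?expR_gt0 ?sumr_ge0 // => i _; rewrite expR_ge0.
split; last by rewrite gammaE mxtraceZ mulVf.
have gamma_inv : gamma *m (\tr E *: fun_mx (fun x => expR (beta * x)) U d) = 1%:M.
  rewrite gammaE -scalemxAl -scalemxAr scalerA mulVf // scale1r fun_mxM //.
  rewrite -[RHS](fun_mx1 d U_unitary); apply: eq_fun_mx => x.
  by rewrite mulrC expRxMexpNx_1.
by case/mulmx1_unit: gamma_inv.
Qed.

Lemma density_mx_dim_gt0 n (rho : 'M[C]_n) : density_mx rho -> (0 < n)%N.
Proof.
by case: n rho => // rho [_]; rewrite /mxtrace big_ord0 => /eqP; rewrite eq_sym oner_eq0.
Qed.

Section Athermality.
Variables (n : nat) (gamma rho : 'M[C]_n).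
Hypotheses (tr_gamma : \tr gamma = 1) (rho_density : density_mx rho).

Lemma mxtrace_subZ (c : C) : \tr (rho - c *: gamma) = 1 - c.
Proof. by rewrite raddfB /= mxtraceZ tr_gamma mulr1 rho_density.2. Qed.

Lemma psd_subZ_le1 (c : R) : psd_mx (rho - (c%:C)%C *: gamma) -> c <= 1.
Proof.
move=> /psd_mx_tr_ge0; rewrite mxtrace_subZ -(rmorph1 (real_complex R)) -rmorphB.
by rewrite ler0c subr_ge0.
Qed.

Lemma psd_sub_eq (psd_rho_gamma : psd_mx (rho - gamma)) : rho = gamma.
Proof. by apply/subr0_eq/psd_mx_tr_eq0; rewrite // -(scale1r gamma) mxtrace_subZ subrr. Qed.

Lemma athermality_setP (a : R) : athermality_set gamma rho a <->
  0 <= a /\ psd_mx (rho - ((1 - a)%:C)%C *: gamma).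
Proof.
split=> [[a_ge0 [tau [[psd_tau _] ->]]]|[a_ge0 psd_diff]].
  by split=> //; rewrite [X in psd_mx X]addrC addKr; apply: psd_mxZ.
split=> //; have [a0|a_neq0] := eqVneq a 0.
  move: psd_diff; rewrite a0 subr0 rmorph1 scale1r => /psd_sub_eq rho_gamma.
  by exists rho; rewrite rmorph0 scale0r addr0 {2}rho_gamma.
exists (((a^-1)%:C)%C *: (rho - ((1 - a)%:C)%C *: gamma)); split.
  split; first by apply: psd_mxZ; rewrite ?invr_ge0.
  by rewrite mxtraceZ mxtrace_subZ -rmorphB -rmorphM opprB addrC subrK mulVf // rmorph1.
by rewrite scalerA -rmorphM mulfV // rmorph1 scale1r addrC subrK.
Qed.

End Athermality.

End ComplexMatrices.

Theorem mainTheorem1 (R : realType) (n : nat) (H gamma gamma_isqrt rho : 'M[R[i]]_n)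
    (beta : R) :
  hermitian_mx H -> beta != 0 -> gibbs_state beta H gamma ->
  (* gamma_isqrt is the positive square root of gamma^{-1} *)
  psd_mx gamma_isqrt -> gamma_isqrt *m gamma_isqrt = invmx gamma ->
  density_mx rho ->
  let a := 1 - mu_min (gamma_isqrt *m rho *m gamma_isqrt) in
  [/\ athermality_set gamma rho a,
      (forall a', athermality_set gamma rho a' -> a <= a'),
      0 <= a <= 1,
      (a = 0 <-> rho = gamma) &
      (rho <> gamma -> forall tau : 'M[R[i]]_n, density_mx tau ->
         rho = ((1 - a)%:C)%C *: gamma + (a%:C)%C *: tau ->
         tau = ((a^-1)%:C)%C *: (rho - ((1 - a)%:C)%C *: gamma))].
Proof.
move=> _ _ gibbs psdG GG rho_density.
set G := gamma_isqrt in psdG GG *; set M := G *m rho *m G; set mu := mu_min M.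
move=> a.
have n_gt0 := density_mx_dim_gt0 rho_density.
have [gamma_unit tr_gamma] := gibbs_state_unit_tr n_gt0 gibbs.
have GgammaG : G *m gamma *m G = 1%:M by apply: mulmx1C; rewrite mulmxA GG mulVmx.
have G_unit : G \in unitmx by case/mulmx1_unit: GgammaG; rewrite unitmx_mul => /andP[].
have adjG : adjmx G = G by rewrite -psdG.1.
have psd_M : psd_mx M by rewrite /M -{1}adjG; apply/psd_mx_congr/rho_density.1.
have psd_sub (c : R) : psd_mx (rho - (c%:C)%C *: gamma) <-> c <= mu.
  have congrE : adjmx G *m (rho - (c%:C)%C *: gamma) *m G = M - ((c%:C)%C)%:M.
    by rewrite adjG mulmxBr mulmxBl -scalemxAr -scalemxAl GgammaG scalemx1.
  apply: iff_trans (psd_subC_mu_min psd_M.1 n_gt0 c); rewrite -congrE.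
  exact: iff_sym (psd_mx_congr_unit _ G_unit).
have mu_le1 : mu <= 1 by apply: (psd_subZ_le1 tr_gamma rho_density); apply/psd_sub.
have mu_ge0 : 0 <= mu.
  by apply/(psd_subC_mu_min psd_M.1 n_gt0); rewrite raddf0 subr0.
have mem (a' : R) : athermality_set gamma rho a' <-> 0 <= a' /\ a <= a'.
  apply: iff_trans (athermality_setP tr_gamma rho_density a') _.
  have le_iff : 1 - a' <= mu <-> a <= a' by rewrite /a; split=> ?; lra.
  by split=> -[a'_ge0 le_a']; split; [| apply/le_iff/psd_sub | | apply/psd_sub/le_iff].
have a_min a' : athermality_set gamma rho a' -> a <= a' by case/mem.
have a_ge0 : 0 <= a by rewrite /a subr_ge0.
have a0_iff : a = 0 <-> rho = gamma.
  split=> [a0|rho_gamma].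
    apply: (psd_sub_eq tr_gamma rho_density).
    rewrite -[gamma]scale1r -(rmorph1 (real_complex R)); apply/psd_sub.
    by rewrite /a in a0; lra.
  apply/eqP; rewrite eq_le a_ge0 andbT a_min //.
  by split=> //; exists rho; rewrite rmorph0 scale0r addr0 subr0 rmorph1 scale1r.
split=> //.
- by apply/mem; split.
- by rewrite a_ge0 /a; lra.
- move=> rho_neq_gamma tau _ ->.
  have a_neq0 : a != 0 by apply/eqP => /a0_iff.
  by rewrite addrAC subrr add0r scalerA -rmorphM mulVf // rmorph1 scale1r.
Qed.
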